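(* Let $T_{ab}$ be a rank-2 tensor with symmetric part $S_{ab}=T_{(ab)}$ and antisymmetric part $F_{ab}=T_{[ab]}$. Then there is a real $f$ with $$S_{ac}S_b{}^c+F_{ac}F_b{}^c=fg_{ab},\qquad S_{ac}F_b{}^c+S_{bc}F_a{}^c=0$$ if and only if $T_a{}^b$ defines a null-cone bi-preserving map. Furthermore, in that case $S_{ab}\in\mathcal{DP}\cup-\mathcal{DP}$.
   Context: Lorentzian metric $g_{ab}$ of signature $(+,-,\dots,-)$, dimension $N\ge3$, with time orientation. $T_a{}^b$ is null-cone bi-preserving if both $k^aT_a{}^b$ and $T_a{}^bk_b$ are null or zero for every null $k$ (null: $k\ne0$, $k\cdot k=0$). $\mathcal{DP}$: rank-2 tensors $X$ with $X_{ab}u^av^b\ge0$ for all causal future-pointing $u,v$; $-\mathcal{DP}$ their negatives. *)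

From HB Require Import structures.
From mathcomp Require Import all_boot all_order all_algebra.
From mathcomp Require Import reals.
Set Implicit Arguments. Unset Strict Implicit. Unset Printing Implicit Defensive.
Import Order.TTheory GRing.Theory Num.Theory.
Local Open Scope ring_scope.

Section Defs.
Variable R : realType.
Variable N : nat.

Definition minkowski : 'M[R]_N :=
  \matrix_(i, j) (if i == j then (if val i == 0%N then 1 else -1) else 0).

Definition form (M : 'M[R]_N) (u v : 'cV[R]_N) : R := (u^T *m M *m v) 0 0.

Definition lorentzian (g : 'M[R]_N) : Prop :=
  exists P : 'M[R]_N, P \in unitmx /\ g = P^T *m minkowski *m P.

(* time orientation is given by a timelike vector t0 *)
Definition timelike (g : 'M[R]_N) (t : 'cV[R]_N) : Prop := 0 < form g t t.

Definition null (g : 'M[R]_N) (k : 'cV[R]_N) : Prop :=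
  k != 0 /\ form g k k = 0.

Definition causal_future (g : 'M[R]_N) (t0 u : 'cV[R]_N) : Prop :=
  u != 0 /\ 0 <= form g u u /\ 0 < form g u t0.

(* T_ab with both indices down; T_a^b = T_ac g^cb.
   k^a T_a^b is the vector g^{-1} T^T k ; T_a^b k_b is the covector T k.
   "null or zero" means the (co)vector has zero squared norm. *)
Definition ncbp (g T : 'M[R]_N) : Prop :=
  forall k : 'cV[R]_N, null g k ->
    form g (invmx g *m T^T *m k) (invmx g *m T^T *m k) = 0 /\
    form (invmx g) (T *m k) (T *m k) = 0.

Definition DP (g : 'M[R]_N) (t0 : 'cV[R]_N) (X : 'M[R]_N) : Prop :=
  forall u v, causal_future g t0 u -> causal_future g t0 v -> 0 <= form X u v.

Definition symp (T : 'M[R]_N) : 'M[R]_N := 2^-1 *: (T + T^T).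
Definition antisymp (T : 'M[R]_N) : 'M[R]_N := 2^-1 *: (T - T^T).

End Defs.

(* Put A := T^T g^-1 T and B := T g^-1 T^T (gram T and gram T^T below).  The
   null-cone conditions on T say that the quadratic forms of A and B vanish on
   the null cone of g, so A = f g and B = f' g, and f = f' by comparing the traces
   of A g^-1 and B g^-1.  The equations on S and F say the same thing, since
   S g^-1 S^T + F g^-1 F^T = (A + B) / 2 and S g^-1 F^T + F g^-1 S^T = (B - A) / 2.
   When N >= 3 the factor f is nonnegative (otherwise two orthogonal spacelike
   vectors would be sent to two orthogonal timelike ones), so g^-1 T and g^-1 T^T
   send causal vectors to causal vectors.  Then T(u, v) = g(u, g^-1 T v) has a
   sign independent of the future causal vectors u and v, hence so has S. *)

From Pilot Require Import Defs.
From HB Require Import structures.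
From mathcomp Require Import all_boot all_order all_algebra.
From mathcomp Require Import reals.
From mathcomp Require Import ring lra.
From Stdlib Require Import Classical.
Set Implicit Arguments. Unset Strict Implicit. Unset Printing Implicit Defensive.
Import Order.TTheory GRing.Theory Num.Theory.
Local Open Scope ring_scope.

(* Plain [form] would denote mathcomp's sesquilinear form. *)
Local Notation form := Defs.form.

Section BilinearForm.
Variables (R : realType) (N : nat).
Implicit Types (M A B C D : 'M[R]_N) (u v w : 'cV[R]_N).

Lemma formDl M u v w : form M (u + v) w = form M u w + form M v w.
Proof. by rewrite /form linearD /= !mulmxDl mxE. Qed.

Lemma formDr M u v w : form M w (u + v) = form M w u + form M w v.
Proof. by rewrite /form mulmxDr mxE. Qed.

Lemma formZl M a u w : form M (a *: u) w = a * form M u w.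
Proof. by rewrite /form linearZ /= -!scalemxAl mxE. Qed.

Lemma formZr M a u w : form M w (a *: u) = a * form M w u.
Proof. by rewrite /form -scalemxAr mxE. Qed.

Lemma form0l M v : form M 0 v = 0.
Proof. by rewrite /form linear0 !mul0mx mxE. Qed.

Lemma form0r M u : form M u 0 = 0.
Proof. by rewrite /form mulmx0 mxE. Qed.

Lemma form_mxD A B u v : form (A + B) u v = form A u v + form B u v.
Proof. by rewrite /form mulmxDr mulmxDl mxE. Qed.

Lemma form_mxZ a A u v : form (a *: A) u v = a * form A u v.
Proof. by rewrite /form -scalemxAr -scalemxAl mxE. Qed.

Lemma form_mxN A u v : form (- A) u v = - form A u v.
Proof. by rewrite -scaleN1r form_mxZ mulN1r. Qed.

Lemma form_trmx M u v : form M u v = form M^T v u.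
Proof.
rewrite /form.
have -> : v^T *m M^T *m u = (u^T *m M *m v)^T by rewrite !trmx_mul trmxK mulmxA.
by rewrite [RHS]mxE.
Qed.

Lemma form_mulmx C D M u v : form (C^T *m M *m D) u v = form M (C *m u) (D *m v).
Proof. by rewrite /form trmx_mul !mulmxA. Qed.

Lemma form_delta M (i j : 'I_N) : form M (delta_mx i 0) (delta_mx j 0) = M i j.
Proof. by rewrite /form trmx_delta -rowE -colE !mxE. Qed.

Lemma form_comb3 M (a b c : R) (i j k : 'I_N) :
  let x := a *: delta_mx i 0 + b *: delta_mx j 0 + c *: delta_mx k 0 in
  form M x x =
    a * a * M i i + a * b * M i j + a * c * M i k
  + b * a * M j i + b * b * M j j + b * c * M j k
  + c * a * M k i + c * b * M k j + c * c * M k k.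
Proof. by rewrite /= !(formDl, formDr, formZl, formZr) !form_delta; ring. Qed.

End BilinearForm.

Section Minkowski.
Variables (R : realType) (N : nat).
Hypothesis N_gt0 : (0 < N)%N.
Implicit Types (X Y : 'cV[R]_N).

Local Notation Mk := (minkowski R N).
Definition time0 : 'I_N := Ordinal N_gt0.

Lemma minkowskiE (i j : 'I_N) :
  Mk i j = if i == j then (if i == time0 then 1 else -1) else 0.
Proof. by rewrite mxE; case: eqP. Qed.

Lemma trmx_minkowski : Mk^T = Mk.
Proof. by apply/matrixP => i j; rewrite !mxE eq_sym; case: eqP => // ->. Qed.

Lemma minkowski_unit : Mk \in unitmx.
Proof.
suff Mk2 : Mk *m Mk = 1%:M by exact: (mulmx1_unit Mk2).1.
apply/matrixP => i j; rewrite !mxE (bigD1 i) //= big1 ?addr0.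
  rewrite !minkowskiE eqxx; case: (eqVneq i j) => [->|]; last by rewrite mulr0.
  by case: ifP => _; rewrite ?mulr1 ?mulrNN ?mulr1.
by move=> k hk; rewrite minkowskiE eq_sym (negbTE hk) mul0r.
Qed.

Lemma form_minkowski X Y :
  form Mk X Y = X time0 0 * Y time0 0 - \sum_(i | i != time0) X i 0 * Y i 0.
Proof.
have col_Mk i : (Mk *m Y) i 0 = (if i == time0 then 1 else -1) * Y i 0.
  rewrite mxE (bigD1 i) //= big1 ?addr0; first by rewrite minkowskiE eqxx.
  by move=> k hk; rewrite minkowskiE eq_sym (negbTE hk) mul0r.
rewrite /form -mulmxA mxE (bigD1 time0) //= -sumrN col_Mk eqxx mul1r mxE.
congr (_ + _); apply: eq_bigr => i /negbTE hi.
by rewrite col_Mk hi mxE mulN1r mulrN.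
Qed.

Lemma form_minkowski_diag X :
  form Mk X X = X time0 0 ^+ 2 - \sum_(i | i != time0) X i 0 ^+ 2.
Proof. by rewrite form_minkowski -expr2; under eq_bigr do rewrite -expr2. Qed.

Lemma spatial_cauchy_schwarz X Y :
  0 <= Y time0 0 ^+ 2 * \sum_(i | i != time0) X i 0 ^+ 2
     + X time0 0 ^+ 2 * \sum_(i | i != time0) Y i 0 ^+ 2
     - 2 * X time0 0 * Y time0 0 * \sum_(i | i != time0) X i 0 * Y i 0.
Proof.
rewrite !mulr_sumr -!big_split -sumrB /=; apply: sumr_ge0 => i _.
have -> : (Y time0 0 ^+ 2 * X i 0 ^+ 2 + X time0 0 ^+ 2 * Y i 0 ^+ 2
   - 2 * X time0 0 * Y time0 0 * (X i 0 * Y i 0)) =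
   (Y time0 0 * X i 0 - X time0 0 * Y i 0) ^+ 2 by ring.
exact: sqr_ge0.
Qed.

Lemma minkowski_causal_eq0 X : 0 <= form Mk X X -> X time0 0 = 0 -> X = 0.
Proof.
rewrite form_minkowski_diag => hX hX0; rewrite hX0 expr0n /= sub0r oppr_ge0 in hX.
have hs : \sum_(i | i != time0) X i 0 ^+ 2 = 0.
  by apply/eqP; rewrite eq_le hX sumr_ge0 // => i _; apply: sqr_ge0.
apply/matrixP => i j; rewrite (ord1 j) mxE.
have [->//|hi] := eqVneq i time0.
by apply/eqP; rewrite -sqrf_eq0; apply/eqP/(psumr_eq0P _ hs) => // k _; apply: sqr_ge0.
Qed.

Lemma minkowski_causal_time_sign X Y :
  0 <= form Mk X X -> 0 <= form Mk Y Y ->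
  0 <= form Mk X Y * (X time0 0 * Y time0 0).
Proof.
rewrite !form_minkowski_diag form_minkowski; have := spatial_cauchy_schwarz X Y.
move: (X time0 0) (Y time0 0) => a b.
move: (\sum_(i | _) X i 0 ^+ 2) (\sum_(i | _) Y i 0 ^+ 2) => p r.
move: (\sum_(i | _) _ * _) => d hk hx hy.
have := mulr_ge0 (sqr_ge0 b) hx; have := mulr_ge0 (sqr_ge0 a) hy.
nra.
Qed.

Lemma minkowski_timelike_causal_neq0 X Y :
  0 < form Mk X X -> 0 <= form Mk Y Y -> Y != 0 -> form Mk X Y != 0.
Proof.
move=> hX hY; apply: contraNneq => hXY.
apply/eqP/minkowski_causal_eq0 => //; move: hX hY hXY.
rewrite !form_minkowski_diag form_minkowski; have := spatial_cauchy_schwarz X Y.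
move: (X time0 0) (Y time0 0) => a b.
move: (\sum_(i | _) X i 0 ^+ 2) (\sum_(i | _) Y i 0 ^+ 2) => p r.
move: (\sum_(i | _) _ * _) => d hk hx hy hxy.
have := mulr_ge0 (sqr_ge0 a) hy.
have : b ^+ 2 <= 0 by nra.
by move=> hb _; apply/eqP; rewrite -sqrf_eq0 eq_le hb sqr_ge0.
Qed.

Section NullCone.
Variable Q : 'M[R]_N.
Hypothesis Q_sym : Q^T = Q.
Hypothesis Q_null : forall X, X != 0 -> form Mk X X = 0 -> form Q X X = 0.

Let Qsym i j : Q j i = Q i j.
Proof. by rewrite -[in LHS]Q_sym mxE. Qed.

Let Q_null3 (a b c : R) (j k : 'I_N) : a != 0 -> j != time0 -> k != time0 ->
  let x := a *: delta_mx time0 0 + b *: delta_mx j 0 + c *: delta_mx k 0 in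
  form Mk x x = 0 -> form Q x x = 0.
Proof.
move=> a0 hj hk x; apply: Q_null; apply: contra a0 => /eqP/matrixP/(_ time0 0).
rewrite !mxE !eqxx eq_sym (negbTE hj) eq_sym (negbTE hk).
by rewrite !mulr0 !addr0 mulr1 => ->.
Qed.

Lemma null_quadratic_time_space i :
  i != time0 -> Q time0 i = 0 /\ Q i i = - Q time0 time0.
Proof.
move=> hi; have hi' : time0 != i by rewrite eq_sym.
have := @Q_null3 1 1 0 i i (oner_neq0 _) hi hi.
have := @Q_null3 1 (-1) 0 i i (oner_neq0 _) hi hi.
rewrite /= !form_comb3 !minkowskiE !eqxx (negbTE hi) (negbTE hi') Qsym.
move=> /(_ ltac:(ring)) h1 /(_ ltac:(ring)) h2; split; lra.
Qed.

(* [(5, 3, 4, 0, ...)] is null because 3^2 + 4^2 = 5^2. *)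
Lemma null_quadratic_space_space i j :
  i != time0 -> j != time0 -> i != j -> Q i j = 0.
Proof.
move=> hi hj hij; have hi' : time0 != i by rewrite eq_sym.
have hj' : time0 != j by rewrite eq_sym.
have hji : j != i by rewrite eq_sym.
have := @Q_null3 5 3 4 i j ltac:(by rewrite pnatr_eq0) hi hj.
rewrite /= !form_comb3 !minkowskiE !eqxx (negbTE hi) (negbTE hi') (negbTE hj)
  (negbTE hj') (negbTE hij) (negbTE hji) !(Qsym time0) (Qsym i j).
have [-> ->] := null_quadratic_time_space hi.
have [-> ->] := null_quadratic_time_space hj.
move/(_ ltac:(ring)); lra.
Qed.

Lemma minkowski_null_quadratic : Q = Q time0 time0 *: Mk.
Proof.
apply/matrixP => i j; rewrite mxE minkowskiE.
have [<-|hij] := eqVneq i j.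
  have [->|hi] := eqVneq i time0; first by rewrite mulr1.
  by rewrite (null_quadratic_time_space hi).2 mulrN1.
rewrite mulr0; have [hi0|hi] := eqVneq i time0.
  by rewrite hi0 (@null_quadratic_time_space j _).1 // eq_sym -hi0.
have [->|hj] := eqVneq j time0; first by rewrite Qsym (null_quadratic_time_space hi).1.
exact: null_quadratic_space_space.
Qed.

End NullCone.

End Minkowski.

Section SignCoherence.
Variables (R : realType) (N : nat) (g : 'M[R]_N) (t0 : 'cV[R]_N).
Local Notation future := (causal_future g t0).

Definition sign_coherent (X : 'M[R]_N) := forall u v w z,
  future u -> future v -> future w -> future z -> 0 <= form X u v * form X w z.

Lemma sign_coherent_DP X : sign_coherent X -> DP g t0 X \/ DP g t0 (- X).
Proof.
move=> hX; have [[u [v [hu [hv neg_uv]]]]|all_ge0] :=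
  classic (exists u v, future u /\ future v /\ form X u v < 0).
  right => w z hw hz; rewrite form_mxN oppr_ge0.
  by have := hX _ _ _ _ hu hv hw hz; rewrite nmulr_rge0.
left => w z hw hz; rewrite leNgt; apply/negP => neg_wz.
by apply: all_ge0; exists w, z.
Qed.

Lemma sign_coherent_symp X : sign_coherent X -> sign_coherent (symp X).
Proof.
move=> hX u v w z hu hv hw hz.
have formS x y : form (symp X) x y = 2^-1 * (form X x y + form X y x).
  by rewrite /symp form_mxZ form_mxD [form X^T _ _]form_trmx trmxK.
rewrite !formS mulrACA; apply: mulr_ge0; first by rewrite mulr_ge0 // invr_ge0.
by rewrite mulrDl !mulrDr !addr_ge0 // hX.
Qed.

End SignCoherence.

Section Gram.
Variables (R : realType) (N : nat) (g : 'M[R]_N).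
Implicit Types (T : 'M[R]_N).
Local Notation Gi := (invmx g).

Definition gram T := T^T *m Gi *m T.

Lemma symp_antisymp_sqr T :
  symp T *m Gi *m (symp T)^T + antisymp T *m Gi *m (antisymp T)^T =
  2^-1 *: (gram T + gram T^T).
Proof.
rewrite /symp /antisymp /gram !linearZ /= !(linearD, linearB, linearN) /= !trmxK.
rewrite !(mulmxDl, mulmxDr, mulmxBl, mulmxBr, mulNmx, mulmxN) -!(scalemxAl, scalemxAr).
by apply/matrixP => i j; rewrite !mxE; field.
Qed.

Lemma symp_antisymp_cross T :
  symp T *m Gi *m (antisymp T)^T + antisymp T *m Gi *m (symp T)^T =
  2^-1 *: (gram T^T - gram T).
Proof.
rewrite /symp /antisymp /gram !linearZ /= !(linearD, linearB, linearN) /= !trmxK.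
rewrite !(mulmxDl, mulmxDr, mulmxBl, mulmxBr, mulNmx, mulmxN) -!(scalemxAl, scalemxAr).
by apply/matrixP => i j; rewrite !mxE; field.
Qed.

Lemma symp_antisymp_gram_scalar T :
  (exists f, symp T *m Gi *m (symp T)^T + antisymp T *m Gi *m (antisymp T)^T = f *: g
          /\ symp T *m Gi *m (antisymp T)^T + antisymp T *m Gi *m (symp T)^T = 0)
  <-> exists f, gram T = f *: g /\ gram T^T = f *: g.
Proof.
rewrite symp_antisymp_sqr symp_antisymp_cross.
split=> [[f [hsum hdiff]] | [f [hT hTt]]]; last first.
  by exists f; rewrite hT hTt; split; apply/matrixP => i j; rewrite !mxE; field.
have eqT : gram T^T = gram T.
  apply/eqP; rewrite -subr_eq0; move/eqP: hdiff.
  by rewrite scaler_eq0 invr_eq0 pnatr_eq0.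
exists f; rewrite eqT -hsum eqT.
by split=> //; apply/matrixP => i j; rewrite !mxE; field.
Qed.

End Gram.

Section Lorentzian.
Variables (R : realType) (N : nat).
Hypothesis N_gt0 : (0 < N)%N.
Variables (P g : 'M[R]_N).
Hypothesis P_unit : P \in unitmx.
Hypothesis gP : g = P^T *m minkowski R N *m P.
Implicit Types (T Q : 'M[R]_N) (u v x y : 'cV[R]_N).

Local Notation Gi := (invmx g).
Local Notation gram := (gram g).

Lemma trmx_lorentzian : g^T = g.
Proof. by rewrite gP !trmx_mul trmxK trmx_minkowski mulmxA. Qed.

Lemma lorentzian_unit : g \in unitmx.
Proof. by rewrite gP !unitmx_mul unitmx_tr P_unit minkowski_unit. Qed.

Lemma trmx_invg : Gi^T = Gi.
Proof. by rewrite trmx_inv trmx_lorentzian. Qed.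

Lemma form_lorentzian x y : form g x y = form (minkowski R N) (P *m x) (P *m y).
Proof. by rewrite gP form_mulmx. Qed.

Lemma lorentzian_null_quadratic Q : Q^T = Q ->
  (forall k, null g k -> form Q k k = 0) -> exists f, Q = f *: g.
Proof.
move=> Q_sym Q_null; pose Q' := (invmx P)^T *m Q *m invmx P.
have Q'_sym : Q'^T = Q' by rewrite !trmx_mul trmxK Q_sym mulmxA.
have Q'_null X : X != 0 -> form (minkowski R N) X X = 0 -> form Q' X X = 0.
  move=> X0 XX; rewrite form_mulmx; apply: Q_null; split.
    by apply: contra X0 => /eqP h; rewrite -(mulKVmx P_unit X) h mulmx0.
  by rewrite form_lorentzian mulKVmx.
exists (Q' (time0 N_gt0) (time0 N_gt0)).
have -> : Q = P^T *m Q' *m P.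
  by rewrite !mulmxA -trmx_mul mulVmx // trmx1 mul1mx -mulmxA mulVmx // mulmx1.
by rewrite {1}(minkowski_null_quadratic N_gt0 Q'_sym Q'_null) -scalemxAr -scalemxAl gP.
Qed.

Definition time_coord x := (P *m x) (time0 N_gt0) 0.

Lemma lorentzian_causal_eq0 x : 0 <= form g x x -> time_coord x = 0 -> x = 0.
Proof.
rewrite form_lorentzian => xx x0.
by rewrite -(mulKmx P_unit x) (minkowski_causal_eq0 xx x0) mulmx0.
Qed.

Lemma lorentzian_causal_time_sign x y : 0 <= form g x x -> 0 <= form g y y ->
  0 <= form g x y * (time_coord x * time_coord y).
Proof. by rewrite !form_lorentzian; apply: minkowski_causal_time_sign. Qed.

Lemma lorentzian_timelike_causal_neq0 x y :
  0 < form g x x -> 0 <= form g y y -> y != 0 -> form g x y != 0.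
Proof.
rewrite !form_lorentzian => xx yy y0; apply: minkowski_timelike_causal_neq0 => //.
by apply: contra y0 => /eqP Py0; rewrite -(mulKmx P_unit y) Py0 mulmx0.
Qed.

Lemma trmx_gram T : (gram T)^T = gram T.
Proof. by rewrite !trmx_mul trmxK trmx_invg mulmxA. Qed.

Lemma form_gram_raised T u v :
  form g (Gi *m T *m u) (Gi *m T *m v) = form (gram T) u v.
Proof.
rewrite -form_mulmx /gram trmx_mul trmx_invg -!mulmxA; congr (form (_ *m _) u v).
by rewrite !mulmxA mulVmx ?lorentzian_unit // mul1mx.
Qed.

Lemma form_raised T u v : form T u v = form g u (Gi *m T *m v).
Proof.
by rewrite /form !mulmxA -(mulmxA u^T g) mulmxV ?lorentzian_unit // mulmx1.
Qed.

Lemma ncbp_gram T : ncbp g T <->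
  forall k, null g k -> form (gram T^T) k k = 0 /\ form (gram T) k k = 0.
Proof.
have gramE k : form Gi (T *m k) (T *m k) = form (gram T) k k by rewrite form_mulmx.
have gramTE k : form g (Gi *m T^T *m k) (Gi *m T^T *m k) = form (gram T^T) k k.
  exact: form_gram_raised.
by split=> h k /h; rewrite gramE gramTE.
Qed.

Lemma gram_scale_eq T f f' : gram T = f *: g -> gram T^T = f' *: g -> f = f'.
Proof.
move=> hT hTt; have : \tr (gram T *m Gi) = \tr (gram T^T *m Gi).
  by rewrite /gram trmxK -(mulmxA (T^T *m Gi)) mxtrace_mulC !mulmxA.
rewrite hT hTt -!scalemxAl mulmxV ?lorentzian_unit // !mxtraceZ mxtrace1.
by move/mulIf; apply; rewrite pnatr_eq0 -lt0n.
Qed.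

Lemma ncbp_gram_scalar T :
  ncbp g T <-> exists f, gram T = f *: g /\ gram T^T = f *: g.
Proof.
rewrite ncbp_gram; split=> [T_null | [f [hT hTt]] k [_ kk]]; last first.
  by rewrite hT hTt !form_mxZ kk mulr0.
have [f hT] := lorentzian_null_quadratic (trmx_gram T) (fun k hk => (T_null k hk).2).
have [f' hTt] := lorentzian_null_quadratic (trmx_gram T^T) (fun k hk => (T_null k hk).1).
by exists f; rewrite hT hTt (gram_scale_eq hT hTt).
Qed.

(* Two g-orthonormal spacelike vectors (they exist since N >= 3) would be sent by
   g^-1 T to two orthogonal timelike vectors if f < 0. *)
Lemma gram_scale_ge0 T f : (2 < N)%N -> gram T = f *: g -> 0 <= f.
Proof.
move=> N_gt2 hT; rewrite leNgt; apply/negP => f_lt0.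
pose e (i : 'I_N) : 'cV[R]_N := Gi *m T *m (invmx P *m delta_mx i 0).
have gram_e i j : form g (e i) (e j) = f * minkowski R N i j.
  by rewrite form_gram_raised hT form_mxZ form_lorentzian !mulKVmx // form_delta.
have N_gt1 : (1 < N)%N by apply: ltn_trans N_gt2.
pose i1 : 'I_N := Ordinal N_gt1; pose i2 : 'I_N := Ordinal N_gt2.
have timelike_e i : i != time0 N_gt0 -> 0 < form g (e i) (e i).
  by move=> /negbTE hi; rewrite gram_e minkowskiE eqxx hi mulrN1 oppr_gt0.
have e2_neq0 : e i2 != 0.
  by apply: contraTneq (timelike_e i2 isT) => ->; rewrite form0l ltxx.
have := lorentzian_timelike_causal_neq0 (timelike_e i1 isT)
  (ltW (timelike_e i2 isT)) e2_neq0.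
by rewrite gram_e minkowskiE mulr0 eqxx.
Qed.

Section TimeOrientation.
Variable t0 : 'cV[R]_N.
Hypothesis t0_timelike : timelike g t0.
Local Notation future := (causal_future g t0).

Lemma future_t0 : future t0.
Proof.
split; last by split; [exact: ltW | exact: t0_timelike].
by apply: contraTneq t0_timelike => ->; rewrite /timelike form0l ltxx.
Qed.

Lemma time_coord_t0_neq0 : time_coord t0 != 0.
Proof.
apply: contraTneq t0_timelike => /(lorentzian_causal_eq0 (ltW t0_timelike)) ->.
by rewrite /timelike form0l ltxx.
Qed.

Lemma future_time_coord u : future u -> 0 < time_coord u * time_coord t0.
Proof.
move=> [u0 [uu ut0]]; rewrite lt_def mulf_neq0 ?time_coord_t0_neq0 //=.
  by rewrite -(pmulr_rge0 _ ut0) lorentzian_causal_time_sign // ltW.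
by apply: contra u0 => /eqP /(lorentzian_causal_eq0 uu) ->.
Qed.

(* [g(u, x)] has the sign of [time_coord u * time_coord x], and [time_coord u]
   that of [time_coord t0]. *)
Lemma future_causal_same_sign u u' x : future u -> future u' ->
  0 <= form g x x -> 0 <= form g u x * form g u' x.
Proof.
move=> hu hu' xx; have [x0|x0] := eqVneq (time_coord x) 0.
  by rewrite (lorentzian_causal_eq0 xx x0) !form0r mulr0.
have ux := lorentzian_causal_time_sign hu.2.1 xx.
have u'x := lorentzian_causal_time_sign hu'.2.1 xx.
have ut0 := future_time_coord hu; have u't0 := future_time_coord hu'.
have c_gt0 : 0 < (time_coord u * time_coord u' * time_coord x * time_coord t0) ^+ 2.
  rewrite exprn_even_gt0 // !mulf_neq0 ?time_coord_t0_neq0 //.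
    by move: ut0; rewrite lt_def mulf_eq0 negb_or => /andP[/andP[]].
  by move: u't0; rewrite lt_def mulf_eq0 negb_or => /andP[/andP[]].
rewrite -(pmulr_lge0 _ c_gt0).
have := mulr_ge0 (mulr_ge0 ux u'x) (mulr_ge0 (ltW ut0) (ltW u't0)).
by congr (_ <= _); ring.
Qed.

(* [T(u, v) = g(u, g^-1 T v) = g(v, g^-1 T^T u)] with both raised vectors causal,
   so the sign of [T(u, v)] depends neither on [u] nor on [v]; [t0] relays the
   comparison between two arbitrary pairs. *)
Lemma sign_coherent_gram T f : gram T = f *: g -> gram T^T = f *: g -> 0 <= f ->
  sign_coherent g t0 T.
Proof.
move=> hT hTt f_ge0.
have raised_causal S v : gram S = f *: g -> future v ->
    0 <= form g (Gi *m S *m v) (Gi *m S *m v).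
  by move=> hS [_ [vv _]]; rewrite form_gram_raised hS form_mxZ mulr_ge0.
have sign_in_u u u' v : future u -> future u' -> future v ->
    0 <= form T u v * form T u' v.
  move=> hu hu' hv; rewrite (form_raised T u) (form_raised T u').
  exact: future_causal_same_sign hu hu' (raised_causal _ _ hT hv).
have sign_in_v u v v' : future u -> future v -> future v' ->
    0 <= form T u v * form T u v'.
  move=> hu hv hv'; rewrite ![form T u _]form_trmx.
  rewrite (form_raised T^T v) (form_raised T^T v').
  exact: future_causal_same_sign hv hv' (raised_causal _ _ hTt hu).
have t0_neq0 u v : future u -> future v -> form T u v != 0 -> form T t0 v != 0.
  move=> hu hv; rewrite (form_raised T u) (form_raised T t0).
  have [->|Tv0] := eqVneq (Gi *m T *m v) 0; first by rewrite form0r eqxx.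
  move=> _; apply: lorentzian_timelike_causal_neq0 Tv0 => //.
  exact: raised_causal hT hv.
move=> u v w z hu hv hw hz.
have [->|uv0] := eqVneq (form T u v) 0; first by rewrite mul0r.
have [->|wz0] := eqVneq (form T w z) 0; first by rewrite mulr0.
have c_gt0 : 0 < (form T t0 v * form T t0 z) ^+ 2.
  rewrite exprn_even_gt0 // mulf_neq0 //; first exact: (t0_neq0 u).
  exact: (t0_neq0 w).
rewrite -(pmulr_lge0 _ c_gt0).
have uv := sign_in_u _ _ _ future_t0 hu hv; have wz := sign_in_u _ _ _ future_t0 hw hz.
have := mulr_ge0 (mulr_ge0 uv wz) (sign_in_v _ _ _ future_t0 hv hz).
by congr (_ <= _); ring.
Qed.

End TimeOrientation.

End Lorentzian.

Theorem mainTheorem12 (R : realType) (N : nat) (hN : (3 <= N)%N)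
  (g : 'M[R]_N) (t0 : 'cV[R]_N) (hg : lorentzian g) (ht0 : timelike g t0)
  (T : 'M[R]_N) :
  let S := symp T in
  let F := antisymp T in
  ((exists f : R,
      S *m invmx g *m S^T + F *m invmx g *m F^T = f *: g /\
      S *m invmx g *m F^T + F *m invmx g *m S^T = 0)
   <-> ncbp g T)
  /\ (ncbp g T -> DP g t0 S \/ DP g t0 (- S)).
Proof.
move=> S F; have [P [P_unit gP]] := hg.
have N_gt0 : (0 < N)%N by apply: leq_trans hN.
have ncbpE := ncbp_gram_scalar N_gt0 P_unit gP T.
split; first by rewrite symp_antisymp_gram_scalar ncbpE.
move=> /ncbpE [f [hT hTt]].
apply: sign_coherent_DP; apply: sign_coherent_symp.
apply: (sign_coherent_gram N_gt0 P_unit gP ht0 hT hTt).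
exact: (gram_scale_ge0 N_gt0 P_unit gP hN hT).
Qed.
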